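(* Let $\theta>0$. Let $X_1,\ldots,X_n$ be independent random variables with $P(X_i>x)=(1+x/\theta)^{-\alpha_i}$, $x>0$, $\alpha_i>0$, and $Y_1,\ldots,Y_n$ independent random variables with $P(Y_i>x)=(1+x/\theta)^{-\alpha_i^*}$, $x>0$, $\alpha_i^*>0$. Let $\underline{\alpha}=(\alpha_1,\ldots,\alpha_n)$ and $\underline{\alpha}^*=(\alpha_1^*,\ldots,\alpha_n^* )$. If $\underline{\alpha}\prec^{w}\underline{\alpha}^*$, then $X_{n:n}\leq_{rh}Y_{n:n}$.
   Context: $X_{n:n}=\max(X_1,\ldots,X_n)$. Weak supermajorization: $\underline{a}\prec^{w}\underline{b}$ means $\sum_{i=1}^k a_{i:n}\geq\sum_{i=1}^k b_{i:n}$ for all $k=1,\ldots,n$, where $a_{1:n}\leq\cdots\leq a_{n:n}$ is the increasing rearrangement of $\underline a$ (similarly for $\underline b$). $X\leq_{rh}Y$ (reversed hazard rate order) for $X\sim F$, $Y\sim G$ means $G(x)/F(x)$ is increasing in $x$ (equivalently $f/F\leq g/G$). *)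

From HB Require Import structures.
From mathcomp Require Import all_boot all_order all_algebra.
From mathcomp Require Import all_classical all_reals all_analysis.
Set Implicit Arguments. Unset Strict Implicit. Unset Printing Implicit Defensive.
Import Order.TTheory GRing.Theory Num.Theory.
Local Open Scope classical_set_scope.
Local Open Scope ring_scope.

Section Defs.
Context {d : measure_display} {T : measurableType d} {R : realType}.
Implicit Types (P : probability T R).

Definition mutually_independent (P : probability T R) (n : nat)
  (X : 'I_n -> {RV P >-> R}) : Prop :=
  forall B : 'I_n -> set R, (forall i, measurable (B i)) ->
    P [set t | forall i, B i (X i t)] = (\prod_(i < n) P (X i @^-1` B i))%E.

(* X_{n:n} = max(X_1,...,X_n), as an extended real (= -oo only if n = 0) *)
Definition maxrv (P : probability T R) (n : nat) (X : 'I_n -> {RV P >-> R})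
  (t : T) : \bar R := \big[Order.max/-oo%E]_(i < n) (X i t)%:E.

Definition dfun (P : probability T R) (Z : T -> \bar R) (x : R) : R :=
  fine (P [set t | (Z t <= x%:E)%E]).
End Defs.

(* reversed hazard rate order for distribution functions F (of X), G (of Y):
   G/F increasing, in the standard cross-multiplied form
   F(x) G(y) >= F(y) G(x) for all x <= y. *)
Definition rh_le {R : realType} (F G : R -> R) : Prop :=
  forall x y : R, x <= y -> F y * G x <= F x * G y.

(* weak supermajorization a ≺^w b : for every k = 1..n, the sum of the k
   smallest entries of a is >= the sum of the k smallest entries of b. *)
Definition weak_supmaj {R : realType} (n : nat) (a b : 'I_n -> R) : Prop :=
  forall k : nat, (1 <= k <= n)%N ->
    \sum_(x <- take k (sort <=%R (codom a))) x >=
    \sum_(x <- take k (sort <=%R (codom b))) x.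
Arguments dfun {d T R} P Z x.

(* Since x |-> ln (1 + x / theta) is increasing, ln (1 + X_i / theta) is
   exponential with rate alpha_i.  For 0 < x <= y put u = ln (1 + x / theta)
   and v = ln (1 + y / theta); the reversed hazard rate inequality
   F(y) G(x) <= F(x) G(y) between the distribution functions of the two maxima
   becomes  sum_i psi (alpha_i) <= sum_i psi (alpha*_i)  with
   psi c = ln (1 - e^(-v c)) - ln (1 - e^(-u c)).  The function psi is
   decreasing and convex on (0, +oo): psi' <= 0 because w / (e^w - 1)
   decreases, and psi'' >= 0 because w / sinh w decreases.  For such a
   function weak supermajorization gives the inequality: tangents at the
   sorted alpha_(i) reduce it to
     sum_i psi'(alpha_(i)) (alpha*_(i) - alpha_(i)) >= 0,
   which is Abel summation with nondecreasing nonpositive weights and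
   nonpositive partial sums.  For x <= 0 the distribution function of the
   maximum of the Y_i vanishes at x. *)

From HB Require Import structures.
From mathcomp Require Import all_boot all_order all_algebra.
From mathcomp Require Import all_classical all_reals all_analysis.
From mathcomp Require Import ring lra.
Set Implicit Arguments. Unset Strict Implicit. Unset Printing Implicit Defensive.
Import Order.TTheory GRing.Theory Num.Theory.
Local Open Scope classical_set_scope.
Local Open Scope ring_scope.

(* [m] is a lower bound for the weights [c x] and [D] a partial sum carried
   over from an initial segment; [m = D = 0] is Abel's inequality. *)
Lemma abel_sum_ge (R : realDomainType) (c : R -> R) (m D : R) (s t : seq R) :
  size s = size t -> path <=%R m (map c s) -> last m (map c s) <= 0 ->
  (forall k, D + \sum_(y <- take k t) y <= \sum_(x <- take k s) x) ->
  - (m * D) <= \sum_(p <- zip s t) c p.1 * (p.2 - p.1).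
Proof.
elim: s t m D => [|x s IH] [|y t] m D //=.
  move=> _ _ m_le0 prefix; have := prefix 0%N; rewrite !big_nil addr0 => D_le0.
  by rewrite oppr_le0 mulr_le0.
move=> [size_st] /andP[mx path_cs] last_cs prefix.
have D_le0 : D <= 0 by have := prefix 0%N; rewrite !big_nil addr0.
have prefix' k : D + (y - x) + \sum_(y <- take k t) y <= \sum_(x <- take k s) x.
  by have := prefix k.+1; rewrite /= !big_cons; lra.
have := IH t (c x) (D + (y - x)) size_st path_cs last_cs prefix'.
have := ler_wnM2r D_le0 mx; rewrite big_cons /=; lra.
Qed.

Section convex_of_nondecreasing_derivative.
Variables (R : realType) (f df : R -> R) (a : R).
Hypothesis f_derive : forall x, a <= x -> is_derive x 1 f (df x).
Hypothesis df_nondecr : forall x y, a <= x -> x <= y -> df x <= df y.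

Lemma MVT_halfline x y : a <= x -> x < y ->
  exists2 c, x < c < y & f y - f x = df c * (y - x).
Proof.
move=> ax xy.
have a_le t : x <= t -> a <= t by move/(le_trans ax).
have [|c cxy ->] := MVT xy (fun t txy =>
    f_derive (a_le t (ltW (andP (txy : x < t < y)).1))).
  apply: derivable_within_continuous => t.
  by rewrite in_itv /= => /andP[/a_le/f_derive []].
by exists c; rewrite // -in_itv.
Qed.

Lemma tangent_le x y : a <= x -> a <= y -> df x * (y - x) <= f y - f x.
Proof.
move=> ax ay; case: (ltgtP x y) => [xy|yx|<-]; last by rewrite !subrr mulr0.
  have [c /andP[xc _] ->] := MVT_halfline ax xy.
  apply: ler_wpM2r; first by rewrite subr_ge0 ltW.
  by apply: df_nondecr; rewrite // ltW.
have [c /andP[yc cx] e] := MVT_halfline ay yx.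
rewrite -[f y - f x]opprB e -[y - x]opprB mulrN lerN2.
apply: ler_wpM2r; first by rewrite subr_ge0 ltW.
by apply: df_nondecr; rewrite ltW // (le_lt_trans ay).
Qed.

Lemma secant_le x y : a < x -> x <= y ->
  (f x - f a) * (y - a) <= (f y - f a) * (x - a).
Proof.
move=> ax xy.
have towards_a := tangent_le (ltW ax) (lexx a).
have towards_y := tangent_le (ltW ax) (le_trans (ltW ax) xy).
rewrite -[a - x]opprB mulrN in towards_a.
have : (f x - f a - df x * (x - a)) * (y - x) <= 0.
  by rewrite mulr_le0_ge0 // ?subr_ge0 //; lra.
have : (df x * (y - x) - (f y - f x)) * (x - a) <= 0.
  by rewrite mulr_le0_ge0 // ?subr_ge0 ?(ltW ax) //; lra.
nra.
Qed.

End convex_of_nondecreasing_derivative.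

Section hyperbolic.
Variable R : realType.

Definition sinh (x : R) := (expR x - expR (- x)) / 2.
Definition cosh (x : R) := (expR x + expR (- x)) / 2.

Lemma is_derive_sinh (x : R) : is_derive x 1 sinh (cosh x).
Proof.
rewrite /sinh /cosh; apply: is_derive_eq.
by rewrite !scaler0 add0r mulrN1 opprK mulrC.
Qed.

Lemma cosh_nondecr (x y : R) : 0 <= x -> x <= y -> cosh x <= cosh y.
Proof.
move=> x0 xy; rewrite ler_pM2r // -subr_ge0.
have -> : expR y + expR (- y) - (expR x + expR (- x)) =
          (expR y - expR x) * (1 - expR (- (x + y))).
  rewrite mulrBr mulr1 !mulrBl -!expRD.
  have -> : y - (x + y) = - x by ring.
  have -> : x - (x + y) = - y by ring.
  ring.
rewrite mulr_ge0 // subr_ge0 ?ler_expR ?expR_le1 // oppr_le0 addr_ge0 //.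
exact: le_trans xy.
Qed.

Lemma sinh0 : sinh 0 = 0.
Proof. by rewrite /sinh oppr0 subrr mul0r. Qed.

Lemma expR_secant_le (x y : R) : 0 < x -> x <= y ->
  (expR x - 1) * y <= (expR y - 1) * x.
Proof.
move=> x0 xy.
have expR_nondecr (s t : R) : 0 <= s -> s <= t -> expR s <= expR t.
  by rewrite ler_expR.
have := secant_le (fun t _ => is_derive_expR t) expR_nondecr x0 xy.
by rewrite expR0 !subr0.
Qed.

Lemma sinh_secant_le (x y : R) : 0 < x -> x <= y -> sinh x * y <= sinh y * x.
Proof.
move=> x0 xy.
have := secant_le (fun t _ => is_derive_sinh t) cosh_nondecr x0 xy.
by rewrite sinh0 !subr0.
Qed.

Lemma sinh_gt0 (x : R) : 0 < x -> 0 < sinh x.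
Proof. by move=> x0; rewrite divr_gt0 // subr_gt0 ltr_expR gtrN. Qed.

Lemma sqr_2sinh_half (w : R) :
  (2 * sinh (w / 2)) ^+ 2 = (expR w - 1) ^+ 2 / expR w.
Proof.
have e2 : expR w = expR (w / 2) ^+ 2 by rewrite -expRM_natr divfK // pnatr_eq0.
rewrite /sinh mulrC divfK ?pnatr_eq0 // expRN e2.
by field; rewrite gt_eqF ?expR_gt0.
Qed.

End hyperbolic.

Lemma sumr_zipB (T : Type) (V : zmodType) (F : T -> V) (s t : seq T) :
  size s = size t ->
  \sum_(p <- zip s t) (F p.2 - F p.1) = \sum_(y <- t) F y - \sum_(x <- s) F x.
Proof.
elim: s t => [|x s IH] [|y t] //=; first by rewrite !big_nil subrr.
by move=> [/IH sum_st]; rewrite !big_cons sum_st opprD addrACA.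
Qed.

Section weak_supmajorization.
Variables (R : realType) (g dg : R -> R).
Hypothesis g_derive : forall x : R, 0 < x -> is_derive x 1 g (dg x).
Hypothesis dg_le0 : forall x : R, 0 < x -> dg x <= 0.
Hypothesis dg_nondecr : forall x y : R, 0 < x -> x <= y -> dg x <= dg y.

Let tangent (x y : R) : 0 < x -> 0 < y -> dg x * (y - x) <= g y - g x.
Proof.
move=> x0 y0; have m0 : 0 < Num.min x y by rewrite lt_min x0.
apply: (@tangent_le _ g dg (Num.min x y)); rewrite ?ge_min ?lexx ?orbT //.
- by move=> t /(lt_le_trans m0) /g_derive.
- by move=> s t /(lt_le_trans m0) s0 /(dg_nondecr s0).
Qed.

Lemma sum_le_of_prefix_sum_ge (s t : seq R) :
  size s = size t -> sorted <=%R s ->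
  {in s, forall x, 0 < x} -> {in t, forall y, 0 < y} ->
  (forall k, \sum_(y <- take k t) y <= \sum_(x <- take k s) x) ->
  \sum_(x <- s) g x <= \sum_(y <- t) g y.
Proof.
case: s t => [|x s] [|y t] // size_st sorted_s s_pos t_pos prefix.
rewrite -subr_ge0 -sumr_zipB //.
have abel : 0 <= \sum_(p <- zip (x :: s) (y :: t)) dg p.1 * (p.2 - p.1).
  have := @abel_sum_ge _ dg (dg x) 0 _ _ size_st; rewrite mulr0 oppr0; apply.
  - rewrite /= lexx /=.
    apply: (homo_path_in (P := [pred z | 0 < z])) sorted_s; last exact/allP.
    by move=> a b a0 _; apply: dg_nondecr.
  - by rewrite /= last_map dg_le0 // s_pos // mem_last.
  - by move=> k; rewrite add0r prefix.
apply: le_trans abel _.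
rewrite big_seq [X in _ <= X]big_seq; apply: ler_sum => p p_st.
have p1 : p.1 \in x :: s by rewrite -(unzip1_zip (eq_leq size_st)); apply: map_f.
have p2 : p.2 \in y :: t.
  by rewrite -(unzip2_zip (eq_leq (esym size_st))); apply: map_f.
exact: tangent (s_pos _ p1) (t_pos _ p2).
Qed.

Lemma sum_le_weak_supmaj n (a b : 'I_n -> R) :
  (forall i, 0 < a i) -> (forall i, 0 < b i) -> weak_supmaj a b ->
  \sum_i g (a i) <= \sum_i g (b i).
Proof.
move=> a_pos b_pos maj.
have sum_sort (c : 'I_n -> R) :
    \sum_(x <- sort <=%R (codom c)) g x = \sum_i g (c i).
  by rewrite (perm_big (codom c)) ?perm_sort // big_map big_enum.
have size_sort_codom (c : 'I_n -> R) : size (sort <=%R (codom c)) = n.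
  by rewrite size_sort size_codom card_ord.
rewrite -!sum_sort; apply: sum_le_of_prefix_sum_ge.
- by rewrite !size_sort_codom.
- exact/sort_sorted/le_total.
- by move=> x; rewrite mem_sort => /codomP[i ->].
- by move=> x; rewrite mem_sort => /codomP[i ->].
move=> k; rewrite -[sort _ (codom a)]take_size -[sort _ (codom b)]take_size.
rewrite -!take_min !size_sort_codom.
have [->|k_gt0] := posnP (minn k n); first by rewrite !take0 !big_nil.
by apply: maj; rewrite k_gt0 geq_minr.
Qed.

End weak_supmajorization.

Lemma is_derive_ln1BexpRN (R : realType) (k c : R) : 0 < k -> 0 < c ->
  is_derive c 1 (fun c => ln (1 - expR (- (k * c)))) (k / (expR (k * c) - 1)).
Proof.
move=> k0 c0.
have pos : 0 < 1 - expR (- (k * c)).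
  by rewrite subr_gt0 expR_lt1 oppr_lt0 mulr_gt0.
have inner : is_derive c 1 (fun c => 1 - expR (- (k * c))) (k * expR (- (k * c))).
  apply: is_derive_eq; rewrite add0r mul1r mulrN opprK mulrC.
  by congr (_ * _); exact: mulr1.
have := @is_derive1_comp _ (@ln R) _ c _ _ (is_derive1_ln pos) inner.
move/is_derive_eq; apply.
have e1 : 0 < expR (k * c) - 1 by rewrite subr_gt0 expR_gt1 mulr_gt0.
by rewrite expRN; field; rewrite !gt_eqF ?expR_gt0.
Qed.

Lemma is_derive_divexpRB1 (R : realType) (k c : R) : 0 < k -> 0 < c ->
  is_derive c 1 (fun c => k / (expR (k * c) - 1))
    (- (k / (2 * sinh (k * c / 2))) ^+ 2).
Proof.
move=> k0 c0.
have e1 : 0 < expR (k * c) - 1 by rewrite subr_gt0 expR_gt1 mulr_gt0.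
have inner : is_derive c 1 (fun c => expR (k * c) - 1) (k * expR (k * c)).
  by apply: is_derive_eq; rewrite subr0 mulrC; congr (_ * _); exact: mulr1.
have := is_deriveZ k (@is_deriveV R _ c _ 1 (lt0r_neq0 e1) inner).
move/is_derive_eq; apply.
rewrite expr_div_n sqr_2sinh_half /GRing.scale /=.
by field; rewrite !gt_eqF ?expR_gt0.
Qed.

Section psi.
Variables (R : realType) (u v : R).
Hypotheses (u_gt0 : 0 < u) (uv : u <= v).

Let v_gt0 : 0 < v. Proof. exact: lt_le_trans uv. Qed.

Definition psi (c : R) := ln (1 - expR (- (v * c))) - ln (1 - expR (- (u * c))).
Definition dpsi (c : R) := v / (expR (v * c) - 1) - u / (expR (u * c) - 1).
Definition ddpsi (c : R) :=
  (u / (2 * sinh (u * c / 2))) ^+ 2 - (v / (2 * sinh (v * c / 2))) ^+ 2.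

Lemma is_derive_psi (c : R) : 0 < c -> is_derive c 1 psi (dpsi c).
Proof. by move=> c0; apply: is_deriveB; apply: is_derive_ln1BexpRN. Qed.

Lemma is_derive_dpsi (c : R) : 0 < c -> is_derive c 1 dpsi (ddpsi c).
Proof.
move=> c0.
have := is_deriveB (is_derive_divexpRB1 v_gt0 c0) (is_derive_divexpRB1 u_gt0 c0).
by rewrite opprK [X in is_derive _ _ _ X]addrC; apply.
Qed.

Lemma dpsi_le0 (c : R) : 0 < c -> dpsi c <= 0.
Proof.
move=> c0; rewrite subr_le0.
have eu : 0 < expR (u * c) - 1 by rewrite subr_gt0 expR_gt1 mulr_gt0.
have ev : 0 < expR (v * c) - 1 by rewrite subr_gt0 expR_gt1 mulr_gt0.
have := expR_secant_le (mulr_gt0 u_gt0 c0) (ler_wpM2r (ltW c0) uv).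
rewrite ler_pdivrMr // mulrAC ler_pdivlMr //.
nra.
Qed.

Lemma ddpsi_ge0 (c : R) : 0 < c -> 0 <= ddpsi c.
Proof.
move=> c0; rewrite /ddpsi.
have cu : 0 < u * c / 2 by rewrite !mulr_gt0.
have cuv : u * c / 2 <= v * c / 2 by rewrite ler_pM2r // ler_pM2r.
have secant := sinh_secant_le cu cuv.
have su0 := sinh_gt0 cu; have sv0 := sinh_gt0 (lt_le_trans cu cuv).
move: secant su0 sv0; set su := sinh (u * c / 2); set sv := sinh (v * c / 2).
move=> secant su0 sv0; rewrite !mulrA !ler_pM2r ?invr_gt0 // in secant.
rewrite subr_ge0 ler_sqr ?nnegrE; last 2 first.
- by rewrite divr_ge0 // ltW // mulr_gt0.
- by rewrite divr_ge0 // ltW // mulr_gt0.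
rewrite -subr_ge0.
have -> : u / (2 * su) - v / (2 * sv) = (sv * u - su * v) / (2 * su * sv).
  by field; rewrite !gt_eqF.
have den : 0 < 2 * su * sv by do 2 apply: mulr_gt0 => //.
by rewrite divr_ge0 ?subr_ge0 // ltW.
Qed.

Lemma dpsi_nondecr (s t : R) : 0 < s -> s <= t -> dpsi s <= dpsi t.
Proof.
move=> s0; rewrite le_eqVlt => /predU1P[<- //|st].
have derive_dpsi x : s <= x -> is_derive x 1 dpsi (ddpsi x).
  by move=> sx; apply: is_derive_dpsi (lt_le_trans s0 sx).
have [c /andP[sc _] dpsi_st] := MVT_halfline derive_dpsi (lexx s) st.
rewrite -subr_ge0 dpsi_st.
by rewrite mulr_ge0 ?ddpsi_ge0 ?(lt_trans s0) // subr_ge0 ltW.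
Qed.

End psi.

Lemma prod_1BexpRN_cross_le (R : realType) n (a b : 'I_n -> R) (u v : R) :
  0 < u -> u <= v -> (forall i, 0 < a i) -> (forall i, 0 < b i) ->
  weak_supmaj a b ->
  (\prod_i (1 - expR (- (v * a i)))) * \prod_i (1 - expR (- (u * b i))) <=
  (\prod_i (1 - expR (- (u * a i)))) * \prod_i (1 - expR (- (v * b i))).
Proof.
move=> u0 uv a_pos b_pos maj.
have prod_expR k (c : 'I_n -> R) : 0 < k -> (forall i, 0 < c i) ->
    \prod_i (1 - expR (- (k * c i))) = expR (\sum_i ln (1 - expR (- (k * c i)))).
  move=> k0 c_pos; rewrite expR_sum; apply: eq_bigr => i _.
  by rewrite lnK // posrE subr_gt0 expR_lt1 oppr_lt0 mulr_gt0.
have v0 := lt_le_trans u0 uv.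
have := sum_le_weak_supmaj (is_derive_psi u0 uv) (dpsi_le0 u0 uv)
  (dpsi_nondecr u0 uv) a_pos b_pos maj.
rewrite /psi !sumrB => sum_psi.
have : \sum_i ln (1 - expR (- (v * a i))) + \sum_i ln (1 - expR (- (u * b i))) <=
       \sum_i ln (1 - expR (- (u * a i))) + \sum_i ln (1 - expR (- (v * b i))).
  lra.
rewrite -ler_expR !expRD -(prod_expR v a v0 a_pos) -(prod_expR u b u0 b_pos).
by rewrite -(prod_expR u a u0 a_pos) -(prod_expR v b v0 b_pos).
Qed.

Definition lomax_tail d (T : measurableType d) (R : realType)
    (P : probability T R) (Z : T -> R) (theta b : R) :=
  forall x, 0 < x -> P [set t | x < Z t] = ((1 + x / theta) `^ (- b))%:E.

Section lomax_maxima.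
Variables (d : measure_display) (T : measurableType d) (R : realType).
Variable P : probability T R.

Lemma prob_maxrv_le n (X : 'I_n -> {RV P >-> R}) (x : R) :
  mutually_independent X ->
  P [set t | (maxrv X t <= x%:E)%E] = (\prod_i P [set t | (X i t <= x)%R])%E.
Proof.
move=> /(_ (fun _ => `]-oo, x]%classic) (fun _ => measurable_itv _)).
have -> : [set t | forall i, `]-oo, x]%classic (X i t)] =
          [set t | (maxrv X t <= x%:E)%E].
  apply/seteqP; split => t /=.
    move=> Xt_le; apply/bigmax_leP; split; first by rewrite leNye.
    by move=> i _; have := Xt_le i; rewrite in_itv /= lee_fin.
  by move=> /bigmax_leP[_ Xt_le] i; rewrite in_itv /= -lee_fin; apply: Xt_le.
by move=> ->; apply: eq_bigr => i _; congr (P _); apply/seteqP; split => t /=;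
  rewrite in_itv.
Qed.

Lemma measurable_rv_le (Z : {RV P >-> R}) (x : R) :
  measurable [set t | Z t <= x].
Proof.
have -> : [set t | Z t <= x] = Z @^-1` `]-oo, x]%classic.
  by apply/seteqP; split => t /=; rewrite in_itv.
exact: measurable_funPTI (measurable_itv _).
Qed.

Lemma prob_le_of_gt (Z : {RV P >-> R}) (x s : R) :
  P [set t | x < Z t] = s%:E -> P [set t | Z t <= x] = (1 - s)%:E.
Proof.
have -> : [set t | Z t <= x] = ~` (Z @^-1` `]x, +oo[%classic).
  by apply/seteqP; split => t /=; rewrite in_itv /= andbT leNgt => /negP.
have -> : [set t | x < Z t] = Z @^-1` `]x, +oo[%classic.
  by apply/seteqP; split => t /=; rewrite in_itv /= andbT.
move=> tail; rewrite probability_setC ?tail //.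
exact: measurable_funPTI (measurable_itv _).
Qed.

Variables (theta : R) (theta_gt0 : 0 < theta).

Lemma lomax_cdf (Z : {RV P >-> R}) (b x : R) :
  lomax_tail P Z theta b -> 0 < x ->
  P [set t | Z t <= x] = (1 - expR (- (ln (1 + x / theta) * b)))%:E.
Proof.
move=> tail x0; rewrite (prob_le_of_gt (tail x x0)) /powR gt_eqF //.
  by rewrite mulNr mulrC.
by rewrite addr_gt0 // divr_gt0.
Qed.

Lemma lomax_cdf_le0 (Z : {RV P >-> R}) (b x : R) : 0 < b ->
  lomax_tail P Z theta b -> x <= 0 -> P [set t | Z t <= x] = 0%E.
Proof.
move=> b0 tail x_le0; apply/eqP; rewrite eq_le measure_ge0 andbT.
apply/lee_addgt0Pr => e e0; rewrite add0e.
(* P (Z <= x) <= P (Z <= eps) = 1 - (1 + eps / theta) `^ (- b)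
              <= b * eps / theta = e *)
pose eps := e * theta / b.
have eps0 : 0 < eps by rewrite !mulr_gt0 ?invr_gt0.
apply: (@le_trans _ _ (P [set t | Z t <= eps])).
  apply: le_measure; rewrite ?inE; try exact: measurable_rv_le.
  by move=> t /= Zt; rewrite (le_trans Zt) // (le_trans x_le0) // ltW.
rewrite (lomax_cdf tail eps0) lee_fin.
have q0 : 0 < eps / theta by rewrite divr_gt0.
have ln_le : ln (1 + eps / theta) * b <= e.
  have -> : e = eps / theta * b by rewrite /eps; field; rewrite !gt_eqF.
  by rewrite ler_pM2r // le_ln1Dx // (lt_trans (ltrN10 R) q0).
have := expR_ge1Dx (- (ln (1 + eps / theta) * b)); lra.
Qed.

Variables (n : nat) (X : 'I_n -> {RV P >-> R}) (a : 'I_n -> R).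
Hypotheses (X_indep : mutually_independent X)
  (X_lomax : forall i, lomax_tail P (X i) theta (a i)).

Lemma dfun_maxrv_gt0 (x : R) : 0 < x ->
  dfun P (maxrv X) x = \prod_i (1 - expR (- (ln (1 + x / theta) * a i))).
Proof.
move=> x0; rewrite /dfun prob_maxrv_le //.
by rewrite (eq_bigr _ (fun i _ => lomax_cdf (X_lomax i) x0)) prodEFin.
Qed.

Lemma dfun_maxrv_le0 (x : R) : (0 < n)%N -> (forall i, 0 < a i) -> x <= 0 ->
  dfun P (maxrv X) x = 0.
Proof.
move=> n_gt0 a_pos x_le0.
rewrite /dfun prob_maxrv_le // (bigD1 (Ordinal n_gt0)) //=.
by rewrite (lomax_cdf_le0 (a_pos _) (X_lomax _) x_le0) mul0e.
Qed.

End lomax_maxima.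

Theorem theorem6 (d : measure_display) (T : measurableType d) (R : realType)
  (P : probability T R) (n : nat) (hn : (0 < n)%N) (theta : R)
  (htheta : 0 < theta) (alpha alphas : 'I_n -> R)
  (halpha : forall i, 0 < alpha i) (halphas : forall i, 0 < alphas i)
  (X Y : 'I_n -> {RV P >-> R})
  (hXind : mutually_independent X) (hYind : mutually_independent Y)
  (hX : forall i (x : R), 0 < x ->
     P [set t | x < X i t] = ((1 + x / theta) `^ (- alpha i))%:E)
  (hY : forall i (x : R), 0 < x ->
     P [set t | x < Y i t] = ((1 + x / theta) `^ (- alphas i))%:E)
  (hmaj : weak_supmaj alpha alphas) :
  rh_le (dfun P (maxrv X)) (dfun P (maxrv Y)).
Proof.
move=> x y xy; have [x_le0|x_gt0] := leP x 0.
  rewrite (dfun_maxrv_le0 htheta hYind hY hn halphas x_le0) mulr0.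
  by rewrite mulr_ge0 // fine_ge0 // measure_ge0.
have y_gt0 := lt_le_trans x_gt0 xy.
rewrite !(dfun_maxrv_gt0 htheta hXind hX) // !(dfun_maxrv_gt0 htheta hYind hY) //.
apply: prod_1BexpRN_cross_le => //.
  by rewrite ln_gt0 // ltrDl divr_gt0.
by rewrite ler_ln ?posrE ?addr_gt0 ?divr_gt0 // lerD2l ler_pM2r ?invr_gt0.
Qed.
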